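(* Let $\Sigma$ be a signature on standard form over a variable system with the de Bruijn property, $F=(F,\sigma,\theta):\mathcal F_\Sigma\to\mathcal C$ a cwf morphism, and $\Pi$ a predicate signature on standard form over $\Sigma$. Let $\mathcal D=(\mathcal C,\mathrm{Pr}^{\mathcal D},\forall',\exists')$ be a first-order hyperdoctrine over $\mathcal C$, and suppose that for each $(\Gamma_R,R)\in\Pi$ an element $R^*\in\mathrm{Pr}^{\mathcal D}(F(\Gamma_R))$ is given. Then there is a unique $F$-based hyperdoctrine morphism $G:\mathcal H_{\Sigma,\Pi,\emptyset}\to\mathcal D$ with $G_{\Gamma_R}(\Gamma_R,R(\mathrm{OV}(\Gamma_R)))=R^*$ for each $(\Gamma_R,R)\in\Pi$.
   Context: Type system: fix an infinite set $V$ of variables with decidable equality and a fresh variable provider: functions $\varphi,\mathsf{fr}$ assigning to each finite $X\subseteq V$ an inhabited $\varphi(X)\subseteq V\setminus X$ and $\mathsf{fr}(X)\in\varphi(X)$; de Bruijn property: $\varphi(X)=\{\mathsf{fr}(X)\}$. Disjoint sets $F$ (function symbols), $T$ (type symbols). Preelements: terms from variables and $F$; pretypes $S(t_1,\ldots,t_n)$, $S\in T$. $\mathrm V(E)$: variables of $E$; $E[\bar a/\bar x]$: simultaneous substitution. Precontext $\Gamma=x_1:A_1,\ldots,x_n:A_n$ with $x_k\in\varphi(\{x_1,\ldots,x_{k-1}\})$, $\mathrm V(A_k)\subseteq\{x_1,\ldots,x_{k-1}\}$; $\mathrm{OV}(\Gamma)=x_1,\ldots,x_n$; $\mathrm{Fresh}(\Gamma)=\varphi(\mathrm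 V(\Gamma))$, $\mathrm{fresh}(\Gamma)=\mathsf{fr}(\mathrm V(\Gamma))$; $E[\bar a/\Gamma]=E[\bar a/x_1,\ldots,x_n]$. Top variables $\mathrm{TV}(\langle\rangle)=\emptyset$, $\mathrm{TV}(\Gamma,x:A)=(\mathrm{TV}(\Gamma)\setminus\mathrm V(A))\cup\{x\}$; a determining sequence is a strictly increasing $\bar i=i_1,\ldots,i_k$ with $\mathrm{TV}(\Gamma)\subseteq\{x_{i_1},\ldots,x_{i_k}\}$, $\bar a_{\bar i}=a_{i_1},\ldots,a_{i_k}$; a declaration is on standard form if $\bar i=1,\ldots,n$ (then $\bar i$ is omitted). Declarations $(\Gamma,S,\bar i)$ and $(\Gamma,f,\bar i,U)$ ($\mathrm V(U)\subseteq\mathrm V(\Gamma)$), each symbol at most once. $\mathcal J(\Sigma)$: smallest set of judgements closed under (R1) $\langle\rangle$ context; (R2) $\Gamma$ context, $A$ type $(\Gamma)$ $\Rightarrow$ $\Gamma,x:A$ context ($x\in\mathrm{Fresh}(\Gamma)$); (R3) $x_1:A_1,\ldots,x_n:A_n$ context $\Rightarrow$ $x_i:A_i\ (x_1:A_1,\ldots,x_n:A_n)$; (R4) $(\Gamma,S,\bar i)\in\Sigma$, $\bar a:\Delta\to\Gamma$ $\Rightarrow$ $S(\bar a_{\bar i})$ type $(\Delta)$; (R5) $(\Gamma,f,\bar i,U)\in\Sigma$, $\bar a:\Delta\to\Gamma$, $U[\bar a/\Gamma]$ type $(\Delta)$ $\Rightarrow$ $f(\bar a_{\bar i}):U[\bar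 a/\Gamma]\ (\Delta)$; where ''$\bar a:\Delta\to\Gamma$'' abbreviates $\Delta$ context, $\Gamma$ context, $a_k:A_k[a_1,\ldots,a_{k-1}/x_1,\ldots,x_{k-1}]\ (\Delta)$. $\Sigma$ is a signature if declared contexts are contexts and declared $U$ are types in $\mathcal J(\Sigma)$. Cwf: a category $\mathcal C$ with terminal object; classes $\mathrm{Ty}(\Gamma)$ with functorial substitution $A\{f\}$; context extension $\Gamma.A$ with $\mathrm p(A):\Gamma.A\to\Gamma$; classes $\mathrm{Tm}(\Gamma,A)$ with functorial $a\{f\}\in\mathrm{Tm}(\Delta,A\{f\})$; $\mathrm v_A\in\mathrm{Tm}(\Gamma.A,A\{\mathrm p(A)\})$; $\langle f,a\rangle_A:\Delta\to\Gamma.A$ for $a\in\mathrm{Tm}(\Delta,A\{f\})$ with $\mathrm p(A)\langle f,a\rangle_A=f$, $\mathrm v_A\{\langle f,a\rangle_A\}=a$, $\langle\mathrm p(A)h,\mathrm v_A\{h\}\rangle_A=h$, $\langle f,a\rangle_A g=\langle fg,a\{g\}\rangle_A$; $f.A=\langle f\circ\mathrm p(A\{f\}),\mathrm v_{A\{f\}}\rangle_A:\Delta.A\{f\}\to\Gamma.A$. A cwf morphism $(F,\sigma,\theta):\mathcal C\to\mathcal C'$: a functor $F$ preserving the terminal object, $\sigma_\Gamma:\mathrm{Ty}(\Gamma)\to\mathrm{Ty}'(F\Gamma)$ with $\sigma_\Delta(A\{f\})=\sigma_\Gamma(A)\{Ff\}$, $F(\Gamma.A)=F\Gamma.\sigma_\Gamma(A)$,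 $F(\mathrm p(A))=\mathrm p(\sigma_\Gamma(A))$, and $\theta_{\Gamma,A}:\mathrm{Tm}(\Gamma,A)\to\mathrm{Tm}'(F\Gamma,\sigma_\Gamma(A))$ commuting with substitution, with $\theta(\mathrm v_A)=\mathrm v_{\sigma_\Gamma(A)}$ and $F\langle f,a\rangle_A=\langle Ff,\theta(a)\rangle_{\sigma_\Gamma(A)}$. The cwf $\mathcal F_\Sigma$: objects are contexts $\Gamma$ (i.e. ($\Gamma$ context)$\in\mathcal J(\Sigma)$); morphisms $(\Delta,\Gamma,\bar a)$ with $\bar a:\Delta\to\Gamma$ in $\mathcal J(\Sigma)$, composed by substitution, identity $(\Gamma,\Gamma,\mathrm{OV}(\Gamma))$; $\mathrm{Ty}(\Gamma)=\{(\Gamma,A):(A\text{ type }(\Gamma))\in\mathcal J(\Sigma)\}$, $(\Gamma,A)\{(\Delta,\Gamma,\bar a)\}=(\Delta,A[\bar a/\Gamma])$; $\mathrm{Tm}(\Gamma,(\Gamma,A))=\{((\Gamma,A),a):(a:A\ (\Gamma))\in\mathcal J(\Sigma)\}$; $\Gamma.(\Gamma,S)=\langle\Gamma,\mathrm{fresh}(\Gamma):S\rangle$, $\mathrm p=(\Gamma.(\Gamma,S),\Gamma,\mathrm{OV}(\Gamma))$, $\mathrm v=((\Gamma.(\Gamma,S),S),\mathrm{fresh}(\Gamma))$, $\langle(\Delta,\Gamma,\bar s),((\Delta,S[\bar s/\Gamma]),b)\rangle=(\Delta,\Gamma.(\Gamma,S),(\bar s,b))$. Heyting (pre)algebra: a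 preorder $\le$ (not necessarily antisymmetric) with $\top,\bot,\wedge,\vee,\to$ satisfying $\bot\le x\le\top$, $z\le x\wedge y$ iff $z\le x$ and $z\le y$, $x\vee y\le z$ iff $x\le z$ and $y\le z$, $z\le(x\to y)$ iff $z\wedge x\le y$; morphisms are monotone maps preserving the operations and constants. A first-order hyperdoctrine over a cwf $\mathcal C$ is $(\mathcal C,\mathrm{Pr},\forall,\exists)$ with $\mathrm{Pr}:\mathcal C^{\mathrm{op}}\to\mathrm{Heyting}$ a functor ($R\{f\}=\mathrm{Pr}(f)(R)$) and, for $S\in\mathrm{Ty}(\Gamma)$, monotone $\forall_S,\exists_S:\mathrm{Pr}(\Gamma.S)\to\mathrm{Pr}(\Gamma)$ with $Q\le\forall_S(R)$ iff $Q\{\mathrm p(S)\}\le R$, and $\exists_S(R)\le Q$ iff $R\le Q\{\mathrm p(S)\}$ ($Q\in\mathrm{Pr}(\Gamma)$, $R\in\mathrm{Pr}(\Gamma.S)$), and for $f:\Delta\to\Gamma$: $\forall_S(R)\{f\}=\forall_{S\{f\}}(R\{f.S\})$, $\exists_S(R)\{f\}=\exists_{S\{f\}}(R\{f.S\})$. Given a cwf morphism $F=(F,\sigma,\theta):\mathcal C\to\mathcal C'$ and hyperdoctrines $\mathcal H=(\mathcal C,\mathrm{Pr},\forall,\exists)$, $\mathcal H'=(\mathcal C',\mathrm{Pr}',\forall',\exists')$, an $F$-based morphism $G:\mathcal H\to\mathcal H'$ is a family of Heyting morphisms $G_\Gamma:\mathrm{Pr}(\Gamma)\to\mathrm{Pr}'(F\Gamma)$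 with $G_\Delta(R\{f\})=G_\Gamma(R)\{Ff\}$ for $f:\Delta\to\Gamma$, $G_\Gamma(\forall_S R)=\forall'_{\sigma_\Gamma(S)}(G_{\Gamma.S}R)$ and $G_\Gamma(\exists_S R)=\exists'_{\sigma_\Gamma(S)}(G_{\Gamma.S}R)$. Logic: predicate symbols from a set $P$ disjoint from $F\cup T$; a predicate declaration is $(\Gamma,\bar i,R)$ with ($\Gamma$ context)$\in\mathcal J(\Sigma)$, $\bar i$ determining, $R\in P$ (written $(\Gamma,R)$ on standard form); a predicate signature $\Pi$ declares each symbol at most once. $\mathrm{Form}(\Sigma,\Pi)$ is the smallest set of judgements ''$\phi$ form $(\Gamma)$'' with: $R(\bar a_{\bar i})$ form $(\Delta)$ for $(\Gamma,\bar i,R)\in\Pi$ and $\bar a:\Delta\to\Gamma$ in $\mathcal J(\Sigma)$; $\bot,\top$ form $(\Gamma)$ for contexts $\Gamma$; $(\phi\circ\psi)$ form $(\Gamma)$ for $\circ\in\{\wedge,\vee,\to\}$ from $\phi,\psi$ form $(\Gamma)$; $(Qx:A)\phi$ form $(\Gamma)$ for $Q\in\{\forall,\exists\}$ from $\phi$ form $(\Gamma,x:A)$ (with $(A\text{ type }(\Gamma))\in\mathcal J(\Sigma)$). Capture-avoiding substitution for $\bar a:\Delta\to\Gamma$: $\phi\{(\Delta,\Gamma,\bar a)\}=\phi[\bar a/\Gamma]$ for atomic $\phi$; it commutes with $\top,\bot,\wedge,\vee,\to$; and $((Qx:A)\theta)\{(\Delta,\Gamma,\bar a)\}=(Qy:A[\bar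 a/\Gamma])\,\theta\{(\langle\Delta,y:A[\bar a/\Gamma]\rangle,\langle\Gamma,x:A\rangle,(\bar a,y))\}$ with $y=\mathrm{fresh}(\Delta)$. A sequent is $\phi\Rightarrow_\Gamma\psi$ with $\phi,\psi$ form $(\Gamma)$; a theory is a set of sequents. Write $\mathbf p_\Gamma(x:A)=(\langle\Gamma,x:A\rangle,\Gamma,\mathrm{OV}(\Gamma))$. $\mathrm{Thm}(\Sigma,\Pi,T)$ is the smallest set of sequents containing $T$ and closed under: $\phi\Rightarrow_\Gamma\phi$; cut; $\theta\wedge\psi\Rightarrow_\Gamma\theta$, $\theta\wedge\psi\Rightarrow_\Gamma\psi$, from $\phi\Rightarrow_\Gamma\theta$, $\phi\Rightarrow_\Gamma\psi$ infer $\phi\Rightarrow_\Gamma\theta\wedge\psi$, $\phi\Rightarrow_\Gamma\top$; $\theta\Rightarrow_\Gamma\theta\vee\psi$, $\psi\Rightarrow_\Gamma\theta\vee\psi$, from $\theta\Rightarrow_\Gamma\phi$, $\psi\Rightarrow_\Gamma\phi$ infer $\theta\vee\psi\Rightarrow_\Gamma\phi$, $\bot\Rightarrow_\Gamma\phi$; $\theta\wedge\psi\Rightarrow_\Gamma\phi$ iff $\theta\Rightarrow_\Gamma\psi\to\phi$; $\phi\{\mathbf p_\Gamma(x:A)\}\Rightarrow_{\Gamma,x:A}\psi$ iff $\phi\Rightarrow_\Gamma(\forall x:A)\psi$; $\psi\Rightarrow_{\Gamma,x:A}\phi\{\mathbf p_\Gamma(x:A)\}$ iff $(\exists x:A)\psi\Rightarrow_\Gamma\phi$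 (each ''iff'' read as two rules); and substitution: from $\phi\Rightarrow_\Gamma\psi$ and $\bar a:\Delta\to\Gamma$ infer $\phi\{(\Delta,\Gamma,\bar a)\}\Rightarrow_\Delta\psi\{(\Delta,\Gamma,\bar a)\}$. Lindenbaum–Tarski hyperdoctrine $\mathcal H_{\Sigma,\Pi,T}=(\mathcal F_\Sigma,\mathrm{Pr}_{\Sigma,\Pi,T},\forall,\exists)$: $\mathrm{Pr}_{\Sigma,\Pi,T}(\Gamma)=\{(\Gamma,\phi):(\phi\text{ form }(\Gamma))\in\mathrm{Form}(\Sigma,\Pi)\}$ ordered by $(\Gamma,\phi)\le(\Gamma,\psi)$ iff $(\phi\Rightarrow_\Gamma\psi)\in\mathrm{Thm}(\Sigma,\Pi,T)$, Heyting operations given by the connectives; $\mathrm{Pr}((\Delta,\Gamma,\bar a))(\Gamma,\phi)=(\Delta,\phi\{(\Delta,\Gamma,\bar a)\})$; $\forall_{(\Gamma,A)}(\langle\Gamma,x:A\rangle,\psi)=(\Gamma,(\forall x:A)\psi)$, $\exists_{(\Gamma,A)}(\langle\Gamma,x:A\rangle,\psi)=(\Gamma,(\exists x:A)\psi)$. $\mathcal H_{\Sigma,\Pi,\emptyset}$ is the case $T=\emptyset$. *)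

From Stdlib Require Import List.
Import ListNotations.

(* Finite subsets of V are represented by lists; phi and fr only depend on
   the underlying set of the list (phi_ext, fr_ext). *)
Record VarSys := {
  var : Type;
  var_eq_dec : forall x y : var, {x = y} + {x <> y};
  phi : list var -> var -> Prop;
  fr : list var -> var;
  phi_ext : forall X Y : list var, (forall v, In v X <-> In v Y) ->
            forall v, phi X v <-> phi Y v;
  fr_ext : forall X Y : list var, (forall v, In v X <-> In v Y) -> fr X = fr Y;
  phi_fresh : forall X v, phi X v -> ~ In v X;
  fr_phi : forall X, phi X (fr X)
}.

Definition deBruijn (VS : VarSys) : Prop :=
  forall (X : list (var VS)) (v : var VS), phi VS X v <-> v = fr VS X.

(* A language: a variable system and pairwise disjoint sets of function,
   type and predicate symbols (disjointness = distinct types). *)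
Record Lang := {
  LV : VarSys;
  LF : Type;
  LT : Type;
  LP : Type
}.

Definition V (L : Lang) := var (LV L).

Inductive term (L : Lang) :=
| tvar (x : V L)
| tapp (f : LF L) (args : list (term L)).
Arguments tvar {L} x.
Arguments tapp {L} f args.

Inductive pretype (L : Lang) :=
| pty (S : LT L) (args : list (term L)).
Arguments pty {L} S args.

Definition ctx (L : Lang) := list (V L * pretype L).

Fixpoint tvars {L : Lang} (e : term L) : list (V L) :=
  match e with
  | tvar x => [x]
  | tapp _ args => flat_map tvars args
  end.

Definition yvars {L : Lang} (A : pretype L) : list (V L) :=
  match A with pty _ args => flat_map tvars args end.

Definition OV {L : Lang} (G : ctx L) : list (V L) := map fst G.

Definition cvars {L : Lang} (G : ctx L) : list (V L) :=
  flat_map (fun p => fst p :: yvars (snd p)) G.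

Definition fresh {L : Lang} (G : ctx L) : V L := fr (LV L) (cvars G).

(* simultaneous substitution [ts / xs] on a variable: first match *)
Fixpoint lookup {L : Lang} (xs : list (V L)) (ts : list (term L)) (y : V L)
  : term L :=
  match xs, ts with
  | x :: xs', t :: ts' =>
      if var_eq_dec (LV L) x y then t else lookup xs' ts' y
  | _, _ => tvar y
  end.

Fixpoint tsubst {L : Lang} (xs : list (V L)) (ts : list (term L)) (e : term L)
  : term L :=
  match e with
  | tvar y => lookup xs ts y
  | tapp f args => tapp f (map (tsubst xs ts) args)
  end.

Definition ysubst {L : Lang} (xs : list (V L)) (ts : list (term L))
  (A : pretype L) : pretype L :=
  match A with pty S0 args => pty S0 (map (tsubst xs ts) args) end.

(* Standard form: the determining sequence is 1..n, hence omitted.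
   A partial function declares each symbol at most once. *)
Record Sig (L : Lang) := {
  tdecl : LT L -> option (ctx L);
  fdecl : LF L -> option (ctx L * pretype L)
}.
Arguments tdecl {L} s _.
Arguments fdecl {L} s _.

(* In the premises "abar : Delta -> Gamma" is spelled out as:
   Delta context, Gamma context, |abar| = |Gamma| and
   a_k : A_k[a_1..a_{k-1}/x_1..x_{k-1}] (Delta). *)
Inductive IsCtx {L : Lang} (Sg : Sig L) : ctx L -> Prop :=
| R1 : IsCtx Sg []
| R2 : forall (G : ctx L) (A : pretype L) (x : V L),
    IsCtx Sg G -> IsType Sg G A -> phi (LV L) (cvars G) x ->
    IsCtx Sg (G ++ [(x, A)])
with IsType {L : Lang} (Sg : Sig L) : ctx L -> pretype L -> Prop :=
| R4 : forall (S : LT L) (G D : ctx L) (ts : list (term L)),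
    tdecl Sg S = Some G ->
    IsCtx Sg D -> IsCtx Sg G -> length ts = length G ->
    (forall k x A t, nth_error G k = Some (x, A) -> nth_error ts k = Some t ->
        HasType Sg D t (ysubst (firstn k (OV G)) (firstn k ts) A)) ->
    IsType Sg D (pty S ts)
with HasType {L : Lang} (Sg : Sig L) : ctx L -> term L -> pretype L -> Prop :=
| R3 : forall (G : ctx L) k x A,
    IsCtx Sg G -> nth_error G k = Some (x, A) -> HasType Sg G (tvar x) A
| R5 : forall (f : LF L) (G D : ctx L) (U : pretype L) (ts : list (term L)),
    fdecl Sg f = Some (G, U) ->
    IsCtx Sg D -> IsCtx Sg G -> length ts = length G ->
    (forall k x A t, nth_error G k = Some (x, A) -> nth_error ts k = Some t ->
        HasType Sg D t (ysubst (firstn k (OV G)) (firstn k ts) A)) ->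
    IsType Sg D (ysubst (OV G) ts U) ->
    HasType Sg D (tapp f ts) (ysubst (OV G) ts U).

Definition SubstMor {L : Lang} (Sg : Sig L) (D G : ctx L) (ts : list (term L))
  : Prop :=
  IsCtx Sg D /\ IsCtx Sg G /\ length ts = length G /\
  (forall k x A t, nth_error G k = Some (x, A) -> nth_error ts k = Some t ->
      HasType Sg D t (ysubst (firstn k (OV G)) (firstn k ts) A)).

(* Sigma is a signature: declared contexts are contexts and declared U are
   types (in their declared context).  (Declared contexts being precontexts and
   V(U) ⊆ V(Gamma) follow from these.) *)
Definition IsSignature {L : Lang} (Sg : Sig L) : Prop :=
  (forall S G, tdecl Sg S = Some G -> IsCtx Sg G) /\
  (forall f G U, fdecl Sg f = Some (G, U) -> IsCtx Sg G /\ IsType Sg G U).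

Definition PSig (L : Lang) := LP L -> option (ctx L).

Definition IsPredSig {L : Lang} (Sg : Sig L) (Pi : PSig L) : Prop :=
  forall R G, Pi R = Some G -> IsCtx Sg G.

Inductive form (L : Lang) :=
| fatom (R : LP L) (args : list (term L))
| fbot
| ftop
| fand (p q : form L)
| forr (p q : form L)
| fimp (p q : form L)
| fall (x : V L) (A : pretype L) (p : form L)
| fex (x : V L) (A : pretype L) (p : form L).
Arguments fatom {L} R args.
Arguments fbot {L}.
Arguments ftop {L}.
Arguments fand {L} p q.
Arguments forr {L} p q.
Arguments fimp {L} p q.
Arguments fall {L} x A p.
Arguments fex {L} x A p.

Inductive Form {L : Lang} (Sg : Sig L) (Pi : PSig L) : ctx L -> form L -> Prop :=
| Fm_atom : forall R G D ts, Pi R = Some G -> SubstMor Sg D G ts ->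
    Form Sg Pi D (fatom R ts)
| Fm_bot : forall G, IsCtx Sg G -> Form Sg Pi G fbot
| Fm_top : forall G, IsCtx Sg G -> Form Sg Pi G ftop
| Fm_and : forall G p q, Form Sg Pi G p -> Form Sg Pi G q -> Form Sg Pi G (fand p q)
| Fm_or : forall G p q, Form Sg Pi G p -> Form Sg Pi G q -> Form Sg Pi G (forr p q)
| Fm_imp : forall G p q, Form Sg Pi G p -> Form Sg Pi G q -> Form Sg Pi G (fimp p q)
| Fm_all : forall G x A p, IsType Sg G A -> Form Sg Pi (G ++ [(x, A)]) p ->
    Form Sg Pi G (fall x A p)
| Fm_ex : forall G x A p, IsType Sg G A -> Form Sg Pi (G ++ [(x, A)]) p ->
    Form Sg Pi G (fex x A p).

Fixpoint fsubst {L : Lang} (D G : ctx L) (ts : list (term L)) (p : form L)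
  : form L :=
  match p with
  | fatom R us => fatom R (map (tsubst (OV G) ts) us)
  | fbot => fbot
  | ftop => ftop
  | fand p1 p2 => fand (fsubst D G ts p1) (fsubst D G ts p2)
  | forr p1 p2 => forr (fsubst D G ts p1) (fsubst D G ts p2)
  | fimp p1 p2 => fimp (fsubst D G ts p1) (fsubst D G ts p2)
  | fall x A q =>
      let B := ysubst (OV G) ts A in
      let y := fresh D in
      fall y B (fsubst (D ++ [(y, B)]) (G ++ [(x, A)]) (ts ++ [tvar y]) q)
  | fex x A q =>
      let B := ysubst (OV G) ts A in
      let y := fresh D in
      fex y B (fsubst (D ++ [(y, B)]) (G ++ [(x, A)]) (ts ++ [tvar y]) q)
  end.

Definition pweak {L : Lang} (G : ctx L) (x : V L) (A : pretype L) (p : form L)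
  : form L :=
  fsubst (G ++ [(x, A)]) G (map tvar (OV G)) p.

(* Thm(Sigma, Pi, emptyset): Thm G p q  means  p =>_G q.
   Every rule only produces sequents (both sides formed in G); where this is
   not already guaranteed by the premises it is added as a premise. *)
Inductive Thm {L : Lang} (Sg : Sig L) (Pi : PSig L)
  : ctx L -> form L -> form L -> Prop :=
| T_id : forall G p, Form Sg Pi G p -> Thm Sg Pi G p p
| T_cut : forall G p q r, Thm Sg Pi G p q -> Thm Sg Pi G q r -> Thm Sg Pi G p r
| T_andE1 : forall G p q, Form Sg Pi G p -> Form Sg Pi G q ->
    Thm Sg Pi G (fand p q) p
| T_andE2 : forall G p q, Form Sg Pi G p -> Form Sg Pi G q ->
    Thm Sg Pi G (fand p q) q
| T_andI : forall G r p q, Thm Sg Pi G r p -> Thm Sg Pi G r q ->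
    Thm Sg Pi G r (fand p q)
| T_top : forall G p, Form Sg Pi G p -> Thm Sg Pi G p ftop
| T_orI1 : forall G p q, Form Sg Pi G p -> Form Sg Pi G q ->
    Thm Sg Pi G p (forr p q)
| T_orI2 : forall G p q, Form Sg Pi G p -> Form Sg Pi G q ->
    Thm Sg Pi G q (forr p q)
| T_orE : forall G p q r, Thm Sg Pi G p r -> Thm Sg Pi G q r ->
    Thm Sg Pi G (forr p q) r
| T_bot : forall G p, Form Sg Pi G p -> Thm Sg Pi G fbot p
| T_impI : forall G t p q, Thm Sg Pi G (fand t p) q -> Thm Sg Pi G t (fimp p q)
| T_impE : forall G t p q, Thm Sg Pi G t (fimp p q) -> Thm Sg Pi G (fand t p) q
| T_allI : forall G x A p q,
    Form Sg Pi G p -> Form Sg Pi G (fall x A q) ->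
    Thm Sg Pi (G ++ [(x, A)]) (pweak G x A p) q ->
    Thm Sg Pi G p (fall x A q)
| T_allE : forall G x A p q,
    Form Sg Pi (G ++ [(x, A)]) (pweak G x A p) -> Form Sg Pi (G ++ [(x, A)]) q ->
    Thm Sg Pi G p (fall x A q) ->
    Thm Sg Pi (G ++ [(x, A)]) (pweak G x A p) q
| T_exE : forall G x A p q,
    Form Sg Pi G (fex x A q) -> Form Sg Pi G p ->
    Thm Sg Pi (G ++ [(x, A)]) q (pweak G x A p) ->
    Thm Sg Pi G (fex x A q) p
| T_exI : forall G x A p q,
    Form Sg Pi (G ++ [(x, A)]) q -> Form Sg Pi (G ++ [(x, A)]) (pweak G x A p) ->
    Thm Sg Pi G (fex x A q) p ->
    Thm Sg Pi (G ++ [(x, A)]) q (pweak G x A p)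
| T_subst : forall D G ts p q,
    Thm Sg Pi G p q -> SubstMor Sg D G ts ->
    Form Sg Pi D (fsubst D G ts p) -> Form Sg Pi D (fsubst D G ts q) ->
    Thm Sg Pi D (fsubst D G ts p) (fsubst D G ts q).

(* Terms are presented fibrewise: Tm Gamma is the class of all terms in
   context Gamma, each carrying its type (tmty); Tm(Gamma, A) is
   {a : Tm Gamma | tmty a = A}. *)
Record Cwf := {
  Ob : Type;
  Hom : Ob -> Ob -> Type;
  cid : forall X, Hom X X;
  comp : forall {X Y Z}, Hom Y Z -> Hom X Y -> Hom X Z;
  comp_assoc : forall W X Y Z (f : Hom Y Z) (g : Hom X Y) (h : Hom W X),
    comp f (comp g h) = comp (comp f g) h;
  comp_id_l : forall X Y (f : Hom X Y), comp (cid Y) f = f;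
  comp_id_r : forall X Y (f : Hom X Y), comp f (cid X) = f;
  has_terminal : exists T : Ob, forall X, exists f : Hom X T, forall g, g = f;
  Ty : Ob -> Type;
  tsub : forall {D G}, Ty G -> Hom D G -> Ty D;
  tsub_id : forall G (A : Ty G), tsub A (cid G) = A;
  tsub_comp : forall E D G (A : Ty G) (f : Hom D G) (g : Hom E D),
    tsub A (comp f g) = tsub (tsub A f) g;
  Tm : Ob -> Type;
  tmty : forall {G}, Tm G -> Ty G;
  msub : forall {D G}, Tm G -> Hom D G -> Tm D;
  msub_ty : forall D G (a : Tm G) (f : Hom D G), tmty (msub a f) = tsub (tmty a) f;
  msub_id : forall G (a : Tm G), msub a (cid G) = a;
  msub_comp : forall E D G (a : Tm G) (f : Hom D G) (g : Hom E D),
    msub a (comp f g) = msub (msub a f) g;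
  ext : forall G, Ty G -> Ob;
  pp : forall {G} (A : Ty G), Hom (ext G A) G;
  vv : forall {G} (A : Ty G), Tm (ext G A);
  vv_ty : forall G (A : Ty G), tmty (vv A) = tsub A (pp A);
  pair : forall {D G} (A : Ty G) (f : Hom D G) (a : Tm D),
    tmty a = tsub A f -> Hom D (ext G A);
  pair_p : forall D G (A : Ty G) f a H, comp (pp A) (@pair D G A f a H) = f;
  pair_v : forall D G (A : Ty G) f a H, msub (vv A) (@pair D G A f a H) = a;
  pair_eta : forall D G (A : Ty G) (h : Hom D (ext G A)) H,
    pair A (comp (pp A) h) (msub (vv A) h) H = h;
  pair_comp : forall E D G (A : Ty G) f a H (g : Hom E D) H',
    comp (@pair D G A f a H) g = pair A (comp f g) (msub a g) H'
}.

Arguments cid {c} X.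
Arguments ext {c} G A.

Definition IsTerminal (C : Cwf) (T : Ob C) : Prop :=
  forall X : Ob C, exists f : Hom C X T, forall g, g = f.

Definition qmor (C : Cwf) (D G : Ob C) (f : Hom C D G) (A : Ty C G)
  : Hom C (ext D (tsub C A f)) (ext G A) :=
  pair C A (comp C f (pp C (tsub C A f))) (vv C (tsub C A f))
    (eq_trans (vv_ty C _ (tsub C A f)) (eq_sym (tsub_comp C _ _ _ A f (pp C (tsub C A f))))).

Arguments qmor C {D G} f A.

Record HPA := {
  hcar : Type;
  hle : hcar -> hcar -> Prop;
  hle_refl : forall x, hle x x;
  hle_trans : forall x y z, hle x y -> hle y z -> hle x z;
  htop : hcar;
  hbot : hcar;
  hmeet : hcar -> hcar -> hcar;
  hjoin : hcar -> hcar -> hcar;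
  himp : hcar -> hcar -> hcar;
  hbot_le : forall x, hle hbot x;
  hle_top : forall x, hle x htop;
  hmeet_spec : forall x y z, hle z (hmeet x y) <-> hle z x /\ hle z y;
  hjoin_spec : forall x y z, hle (hjoin x y) z <-> hle x z /\ hle y z;
  himp_spec : forall x y z, hle z (himp x y) <-> hle (hmeet z x) y
}.

Definition IsHMor (A B : HPA) (h : hcar A -> hcar B) : Prop :=
  (forall x y, hle A x y -> hle B (h x) (h y)) /\
  h (htop A) = htop B /\ h (hbot A) = hbot B /\
  (forall x y, h (hmeet A x y) = hmeet B (h x) (h y)) /\
  (forall x y, h (hjoin A x y) = hjoin B (h x) (h y)) /\
  (forall x y, h (himp A x y) = himp B (h x) (h y)).

Record Hyperdoctrine (C : Cwf) := {
  Pr : Ob C -> HPA;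
  prsub : forall {D G : Ob C}, Hom C D G -> hcar (Pr G) -> hcar (Pr D);
  prsub_id : forall G R, prsub (cid G) R = R;
  prsub_comp : forall E D G (f : Hom C D G) (g : Hom C E D) R,
    prsub (comp C f g) R = prsub g (prsub f R);
  prsub_hmor : forall D G (f : Hom C D G), IsHMor (Pr G) (Pr D) (prsub f);
  hall : forall {G} (S : Ty C G), hcar (Pr (ext G S)) -> hcar (Pr G);
  hex : forall {G} (S : Ty C G), hcar (Pr (ext G S)) -> hcar (Pr G);
  hall_mono : forall G S R R', hle (Pr (ext G S)) R R' -> hle (Pr G) (hall S R) (hall S R');
  hex_mono : forall G S R R', hle (Pr (ext G S)) R R' -> hle (Pr G) (hex S R) (hex S R');
  hall_adj : forall G (S : Ty C G) Q R,
    hle (Pr G) Q (hall S R) <-> hle (Pr (ext G S)) (prsub (pp C S) Q) R;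
  hex_adj : forall G (S : Ty C G) Q R,
    hle (Pr G) (hex S R) Q <-> hle (Pr (ext G S)) R (prsub (pp C S) Q);
  hall_bc : forall D G (f : Hom C D G) (S : Ty C G) R,
    prsub f (hall S R) = hall (tsub C S f) (prsub (qmor C f S) R);
  hex_bc : forall D G (f : Hom C D G) (S : Ty C G) R,
    prsub f (hex S R) = hex (tsub C S f) (prsub (qmor C f S) R)
}.
Arguments Pr {C} h _.
Arguments prsub {C} h {D G} _ _.
Arguments hall {C} h {G} S _.
Arguments hex {C} h {G} S _.


Definition CtxO {L : Lang} (Sg : Sig L) := { G : ctx L | IsCtx Sg G }.
Definition HomS {L : Lang} (Sg : Sig L) (D G : CtxO Sg) :=
  { ts : list (term L) | SubstMor Sg (proj1_sig D) (proj1_sig G) ts }.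
Definition TyS {L : Lang} (Sg : Sig L) (G : CtxO Sg) :=
  { A : pretype L | IsType Sg (proj1_sig G) A }.
Definition TmS {L : Lang} (Sg : Sig L) (G : CtxO Sg) :=
  { Aa : pretype L * term L |
    IsType Sg (proj1_sig G) (fst Aa) /\ HasType Sg (proj1_sig G) (snd Aa) (fst Aa) }.

Definition tmtyS {L : Lang} {Sg : Sig L} {G : CtxO Sg} (t : TmS Sg G) : TyS Sg G :=
  exist _ (fst (proj1_sig t)) (proj1 (proj2_sig t)).

Definition emptyS {L : Lang} (Sg : Sig L) : CtxO Sg := exist _ [] (R1 Sg).

Definition extS {L : Lang} {Sg : Sig L} (G : CtxO Sg) (A : TyS Sg G) : CtxO Sg :=
  exist _ (proj1_sig G ++ [(fresh (proj1_sig G), proj1_sig A)])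
    (R2 Sg _ _ _ (proj2_sig G) (proj2_sig A) (fr_phi (LV L) (cvars (proj1_sig G)))).

Definition compS {L : Lang} {Sg : Sig L} {E D G : CtxO Sg}
  (m1 : HomS Sg D G) (m2 : HomS Sg E D) : list (term L) :=
  map (tsubst (OV (proj1_sig D)) (proj1_sig m2)) (proj1_sig m1).

Definition castDom (C : Cwf) (X Y Z : Ob C) (e : X = Y) (h : Hom C X Z) : Hom C Y Z :=
  match e in _ = W return Hom C W Z with eq_refl => h end.
Definition castCod (C : Cwf) (X Y Z : Ob C) (e : Y = Z) (h : Hom C X Y) : Hom C X Z :=
  match e in _ = W return Hom C X W with eq_refl => h end.
Definition castTm (C : Cwf) (X Y : Ob C) (e : X = Y) (a : Tm C X) : Tm C Y :=
  match e in _ = W return Tm C W with eq_refl => a end.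
Definition castPr (C : Cwf) (H : Hyperdoctrine C) (X Y : Ob C) (e : X = Y)
  (R : hcar (Pr H X)) : hcar (Pr H Y) :=
  match e in _ = W return hcar (Pr H W) with eq_refl => R end.
Arguments castDom {C X Y Z} e h.
Arguments castCod {C X Y Z} e h.
Arguments castTm {C X Y} e a.
Arguments castPr {C} H {X Y} e R.

Record CwfMorFS {L : Lang} (Sg : Sig L) (C : Cwf) := {
  Fob : CtxO Sg -> Ob C;
  Fmor : forall D G : CtxO Sg, HomS Sg D G -> Hom C (Fob D) (Fob G);
  Fsig : forall G : CtxO Sg, TyS Sg G -> Ty C (Fob G);
  Fth : forall G : CtxO Sg, TmS Sg G -> Tm C (Fob G);
  F_id : forall (G : CtxO Sg)
    (h : SubstMor Sg (proj1_sig G) (proj1_sig G) (map tvar (OV (proj1_sig G)))),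
    Fmor G G (exist _ _ h) = cid (Fob G);
  F_comp : forall (E D G : CtxO Sg) (m1 : HomS Sg D G) (m2 : HomS Sg E D)
    (h : SubstMor Sg (proj1_sig E) (proj1_sig G) (compS m1 m2)),
    Fmor E G (exist _ _ h) = comp C (Fmor D G m1) (Fmor E D m2);
  F_term : IsTerminal C (Fob (emptyS Sg));
  Fsig_sub : forall (D G : CtxO Sg) (m : HomS Sg D G) (A : TyS Sg G)
    (h : IsType Sg (proj1_sig D)
           (ysubst (OV (proj1_sig G)) (proj1_sig m) (proj1_sig A))),
    Fsig D (exist _ _ h) = tsub C (Fsig G A) (Fmor D G m);
  F_ext : forall (G : CtxO Sg) (A : TyS Sg G),
    Fob (extS G A) = ext (Fob G) (Fsig G A);
  F_p : forall (G : CtxO Sg) (A : TyS Sg G)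
    (h : SubstMor Sg (proj1_sig (extS G A)) (proj1_sig G) (map tvar (OV (proj1_sig G)))),
    castDom (F_ext G A) (Fmor (extS G A) G (exist _ _ h)) = pp C (Fsig G A);
  Fth_ty : forall (G : CtxO Sg) (t : TmS Sg G), tmty C (Fth G t) = Fsig G (tmtyS t);
  Fth_sub : forall (D G : CtxO Sg) (m : HomS Sg D G) (t : TmS Sg G)
    (h : IsType Sg (proj1_sig D)
           (fst (ysubst (OV (proj1_sig G)) (proj1_sig m) (fst (proj1_sig t)),
                 tsubst (OV (proj1_sig G)) (proj1_sig m) (snd (proj1_sig t)))) /\
         HasType Sg (proj1_sig D)
           (snd (ysubst (OV (proj1_sig G)) (proj1_sig m) (fst (proj1_sig t)),
                 tsubst (OV (proj1_sig G)) (proj1_sig m) (snd (proj1_sig t))))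
           (fst (ysubst (OV (proj1_sig G)) (proj1_sig m) (fst (proj1_sig t)),
                 tsubst (OV (proj1_sig G)) (proj1_sig m) (snd (proj1_sig t))))),
    Fth D (exist _ (ysubst (OV (proj1_sig G)) (proj1_sig m) (fst (proj1_sig t)),
                    tsubst (OV (proj1_sig G)) (proj1_sig m) (snd (proj1_sig t))) h)
    = msub C (Fth G t) (Fmor D G m);
  Fth_v : forall (G : CtxO Sg) (A : TyS Sg G)
    (h : IsType Sg (proj1_sig (extS G A)) (fst (proj1_sig A, tvar (fresh (proj1_sig G)))) /\
         HasType Sg (proj1_sig (extS G A))
           (snd (proj1_sig A, tvar (fresh (proj1_sig G))))
           (fst (proj1_sig A, tvar (fresh (proj1_sig G))))),
    castTm (F_ext G A) (Fth (extS G A) (exist _ (proj1_sig A, tvar (fresh (proj1_sig G))) h))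
    = vv C (Fsig G A);
  F_pair : forall (D G : CtxO Sg) (A : TyS Sg G) (m : HomS Sg D G) (b : term L)
    (hb : IsType Sg (proj1_sig D)
            (fst (ysubst (OV (proj1_sig G)) (proj1_sig m) (proj1_sig A), b)) /\
          HasType Sg (proj1_sig D)
            (snd (ysubst (OV (proj1_sig G)) (proj1_sig m) (proj1_sig A), b))
            (fst (ysubst (OV (proj1_sig G)) (proj1_sig m) (proj1_sig A), b)))
    (h : SubstMor Sg (proj1_sig D) (proj1_sig (extS G A)) (proj1_sig m ++ [b]))
    (H : tmty C (Fth D (exist _ (ysubst (OV (proj1_sig G)) (proj1_sig m) (proj1_sig A), b) hb))
         = tsub C (Fsig G A) (Fmor D G m)),
    castCod (F_ext G A) (Fmor D (extS G A) (exist _ _ h))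
    = pair C (Fsig G A) (Fmor D G m)
        (Fth D (exist _ (ysubst (OV (proj1_sig G)) (proj1_sig m) (proj1_sig A), b) hb)) H
}.

Arguments Fob {L Sg C} c _.
Arguments Fmor {L Sg C} c {D G} _.
Arguments Fsig {L Sg C} c {G} _.
Arguments F_ext {L Sg C} c G A.

(** * The Lindenbaum–Tarski hyperdoctrine H_{Sigma,Pi,emptyset} (fibres and
      quantifiers); its reindexing is phi |-> phi{(Delta,Gamma,abar)} = fsubst *)

Definition PrS {L : Lang} (Sg : Sig L) (Pi : PSig L) (G : CtxO Sg) :=
  { p : form L | Form Sg Pi (proj1_sig G) p }.

Definition PrLT {L : Lang} (Sg : Sig L) (Pi : PSig L) (G : CtxO Sg) : HPA.
Proof.
  refine {|
    hcar := PrS Sg Pi G;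
    hle := fun x y => Thm Sg Pi (proj1_sig G) (proj1_sig x) (proj1_sig y);
    htop := exist _ ftop (Fm_top Sg Pi _ (proj2_sig G));
    hbot := exist _ fbot (Fm_bot Sg Pi _ (proj2_sig G));
    hmeet := fun x y => exist _ (fand (proj1_sig x) (proj1_sig y))
                          (Fm_and Sg Pi _ _ _ (proj2_sig x) (proj2_sig y));
    hjoin := fun x y => exist _ (forr (proj1_sig x) (proj1_sig y))
                          (Fm_or Sg Pi _ _ _ (proj2_sig x) (proj2_sig y));
    himp := fun x y => exist _ (fimp (proj1_sig x) (proj1_sig y))
                          (Fm_imp Sg Pi _ _ _ (proj2_sig x) (proj2_sig y)) |}.
  - intros [x hx]; apply T_id; exact hx.
  - intros x y z; apply T_cut.
  - intros [x hx]; apply T_bot; exact hx.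
  - intros [x hx]; apply T_top; exact hx.
  - intros [x hx] [y hy] [z hz]; simpl; split.
    + intro H; split; eapply T_cut; try exact H.
      * apply T_andE1; assumption.
      * apply T_andE2; assumption.
    + intros [H1 H2]; apply T_andI; assumption.
  - intros [x hx] [y hy] [z hz]; simpl; split.
    + intro H; split; eapply T_cut; try exact H.
      * apply T_orI1; assumption.
      * apply T_orI2; assumption.
    + intros [H1 H2]; apply T_orE; assumption.
  - intros [x hx] [y hy] [z hz]; simpl; split.
    + apply T_impE.
    + apply T_impI.
Defined.

Definition allS {L : Lang} {Sg : Sig L} {Pi : PSig L} (G : CtxO Sg) (A : TyS Sg G)
  (R : PrS Sg Pi (extS G A)) : PrS Sg Pi G :=
  exist _ (fall (fresh (proj1_sig G)) (proj1_sig A) (proj1_sig R))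
    (Fm_all Sg Pi _ _ _ _ (proj2_sig A) (proj2_sig R)).
Definition exS {L : Lang} {Sg : Sig L} {Pi : PSig L} (G : CtxO Sg) (A : TyS Sg G)
  (R : PrS Sg Pi (extS G A)) : PrS Sg Pi G :=
  exist _ (fex (fresh (proj1_sig G)) (proj1_sig A) (proj1_sig R))
    (Fm_ex Sg Pi _ _ _ _ (proj2_sig A) (proj2_sig R)).

Definition FBasedMor {L : Lang} {Sg : Sig L} {Pi : PSig L} {C : Cwf}
  (F : CwfMorFS Sg C) (Dh : Hyperdoctrine C)
  (Gm : forall G : CtxO Sg, PrS Sg Pi G -> hcar (Pr Dh (Fob F G))) : Prop :=
  (forall G : CtxO Sg, IsHMor (PrLT Sg Pi G) (Pr Dh (Fob F G)) (Gm G)) /\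
  (forall (D G : CtxO Sg) (m : HomS Sg D G) (R : PrS Sg Pi G)
     (h : Form Sg Pi (proj1_sig D)
            (fsubst (proj1_sig D) (proj1_sig G) (proj1_sig m) (proj1_sig R))),
     Gm D (exist _ _ h) = prsub Dh (Fmor F m) (Gm G R)) /\
  (forall (G : CtxO Sg) (S : TyS Sg G) (R : PrS Sg Pi (extS G S)),
     Gm G (allS G S R) = hall Dh (Fsig F S) (castPr Dh (F_ext F G S) (Gm (extS G S) R))) /\
  (forall (G : CtxO Sg) (S : TyS Sg G) (R : PrS Sg Pi (extS G S)),
     Gm G (exS G S R) = hex Dh (Fsig F S) (castPr Dh (F_ext F G S) (Gm (extS G S) R))).

Definition InterpretsPreds {L : Lang} {Sg : Sig L} {Pi : PSig L} {C : Cwf}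
  (F : CwfMorFS Sg C) (Dh : Hyperdoctrine C) (hPi : IsPredSig Sg Pi)
  (Rstar : forall (R : LP L) (G : ctx L) (e : Pi R = Some G),
             hcar (Pr Dh (Fob F (exist _ G (hPi R G e)))))
  (Gm : forall G : CtxO Sg, PrS Sg Pi G -> hcar (Pr Dh (Fob F G))) : Prop :=
  forall (R : LP L) (G : ctx L) (e : Pi R = Some G)
    (h : Form Sg Pi G (fatom R (map tvar (OV G)))),
    Gm (exist _ G (hPi R G e)) (exist _ _ h) = Rstar R G e.

(** By the de Bruijn property the variable bound by a well-formed quantifier
    in context [Gamma] is [fresh(Gamma)], so [(forall x:A) phi] is literally
    [forall_(Gamma,A)] applied to [phi] over [Gamma.A].  Hence the morphism is
    forced: a Heyting morphism commuting with reindexing and the quantifiers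
    is determined by its values on atoms, and an atom [R(abar)] in context
    [Delta] is the reindexing of the generic atom [R(OV(Gamma_R))] along
    [abar : Delta -> Gamma_R], whose image is [R^*].
    Conversely, interpreting formulas by structural recursion with exactly
    these clauses gives a family of maps; it commutes with substitution
    (the quantifier case is Beck–Chevalley, because [F] sends the lifted
    substitution [(abar, y)] to [F abar . sigma(A)]), and it is monotone,
    since every rule of [Thm] is valid in a hyperdoctrine. *)
From Stdlib Require Import List Arith Lia ProofIrrelevance.
Import ListNotations.

Section Syntax.
Context {L : Lang}.

Lemma lookup_map_tvar (xs : list (V L)) y : lookup xs (map tvar xs) y = tvar y.
Proof.
  induction xs as [|x xs IH]; simpl; auto.
  destruct (var_eq_dec (LV L) x y); subst; auto.
Qed.

Fixpoint tsubst_map_tvar (xs : list (V L)) (e : term L) {struct e} :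
  tsubst xs (map tvar xs) e = e :=
  match e with
  | tvar y => lookup_map_tvar xs y
  | tapp f args => f_equal (tapp f)
      ((fix go (l : list (term L)) : map (tsubst xs (map tvar xs)) l = l :=
          match l with
          | [] => eq_refl
          | a :: l' => f_equal2 cons (tsubst_map_tvar xs a) (go l')
          end) args)
  end.

Lemma map_tsubst_map_tvar (xs : list (V L)) l : map (tsubst xs (map tvar xs)) l = l.
Proof. induction l; simpl; f_equal; auto using tsubst_map_tvar. Qed.

Lemma ysubst_map_tvar (xs : list (V L)) A : ysubst xs (map tvar xs) A = A.
Proof. destruct A; simpl; f_equal; apply map_tsubst_map_tvar. Qed.

Lemma map_lookup_NoDup (xs : list (V L)) ts :
  NoDup xs -> length ts = length xs -> map (lookup xs ts) xs = ts.
Proof.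
  revert ts; induction xs as [|x xs IH]; intros [|t ts] Hxs Hlen; try discriminate; auto.
  inversion Hxs as [|? ? Hx Hnd]; subst; simpl.
  destruct (var_eq_dec (LV L) x x) as [_|]; [|congruence].
  f_equal. transitivity (map (lookup xs ts) xs); [|apply IH; auto].
  apply map_ext_in. intros y Hy.
  destruct (var_eq_dec (LV L) x y); [subst; contradiction|reflexivity].
Qed.

Lemma OV_app (G1 G2 : ctx L) : OV (G1 ++ G2) = OV G1 ++ OV G2.
Proof. apply map_app. Qed.

Lemma OV_length (G : ctx L) : length (OV G) = length G.
Proof. apply length_map. Qed.

Lemma In_OV_cvars (G : ctx L) x : In x (OV G) -> In x (cvars G).
Proof.
  induction G as [|[y A] G IH]; simpl; auto.
  intros [->|H]; [left; reflexivity|right; apply in_or_app; auto].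
Qed.
End Syntax.

Scheme IsType_mut := Induction for IsType Sort Prop
  with HasType_mut := Induction for HasType Sort Prop.
Combined Scheme IsType_HasType_mut from IsType_mut, HasType_mut.

Section Judgements.
Context {L : Lang} {Sg : Sig L}.

Lemma IsCtx_snoc_inv G x A :
  IsCtx Sg (G ++ [(x, A)]) -> IsCtx Sg G /\ IsType Sg G A /\ phi (LV L) (cvars G) x.
Proof.
  inversion 1 as [HG|G' A' x' HG HA Hx Heq].
  - destruct G; discriminate.
  - apply app_inj_tail in Heq as [-> [= -> ->]]. auto.
Qed.

Lemma IsCtx_snoc_fresh (hdB : deBruijn (LV L)) G x A :
  IsCtx Sg (G ++ [(x, A)]) -> x = fresh G.
Proof. intros H. apply hdB, (IsCtx_snoc_inv _ _ _ H). Qed.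

Lemma IsCtx_OV_NoDup G : IsCtx Sg G -> NoDup (OV G).
Proof.
  induction 1 as [|G A x _ IH _ Hx]; [constructor|].
  rewrite OV_app. apply NoDup_app; [exact IH|repeat constructor; auto|].
  intros y Hy [<-|[]]. exact (phi_fresh _ _ _ Hx (In_OV_cvars _ _ Hy)).
Qed.

Lemma weakening :
  (forall D A, IsType Sg D A -> forall E, IsCtx Sg (D ++ E) -> IsType Sg (D ++ E) A) /\
  (forall D t A, HasType Sg D t A ->
     forall E, IsCtx Sg (D ++ E) -> HasType Sg (D ++ E) t A).
Proof.
  apply (IsType_HasType_mut L Sg
    (fun D A _ => forall E, IsCtx Sg (D ++ E) -> IsType Sg (D ++ E) A)
    (fun D t A _ => forall E, IsCtx Sg (D ++ E) -> HasType Sg (D ++ E) t A));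
    intros.
  - eapply R4; eauto.
  - eapply R3; eauto.
    rewrite nth_error_app1; [eassumption|]. apply nth_error_Some; congruence.
  - eapply R5; eauto.
Qed.

Lemma IsType_weaken D E A : IsType Sg D A -> IsCtx Sg (D ++ E) -> IsType Sg (D ++ E) A.
Proof. intros HA; exact (proj1 weakening D A HA E). Qed.

Lemma HasType_weaken D E t A :
  HasType Sg D t A -> IsCtx Sg (D ++ E) -> HasType Sg (D ++ E) t A.
Proof. intros Ht; exact (proj2 weakening D t A Ht E). Qed.

Lemma SubstMor_id G : IsCtx Sg G -> SubstMor Sg G G (map tvar (OV G)).
Proof.
  intros HG. repeat split; auto.
  - rewrite length_map; apply OV_length.
  - intros k x A t Hk Ht.
    rewrite firstn_map, ysubst_map_tvar.
    rewrite nth_error_map in Ht. unfold OV in Ht. rewrite nth_error_map, Hk in Ht.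
    injection Ht as <-. eapply R3; eauto.
Qed.

Lemma SubstMor_weaken D E G ts :
  SubstMor Sg D G ts -> IsCtx Sg (D ++ E) -> SubstMor Sg (D ++ E) G ts.
Proof.
  intros (HD & HG & Hlen & Hts) HDE. repeat split; auto.
  intros; apply HasType_weaken; eauto.
Qed.

Lemma SubstMor_lift {D G ts x A y} :
  SubstMor Sg D G ts -> IsCtx Sg (G ++ [(x, A)]) ->
  IsCtx Sg (D ++ [(y, ysubst (OV G) ts A)]) ->
  SubstMor Sg (D ++ [(y, ysubst (OV G) ts A)]) (G ++ [(x, A)]) (ts ++ [tvar y]).
Proof.
  intros (HD & HG & Hlen & Hts) HGA HDB. repeat split; auto.
  - rewrite !length_app; simpl; lia.
  - intros k z B t Hz Ht.
    destruct (Nat.lt_ge_cases k (length G)) as [Hlt|Hge].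
    + rewrite nth_error_app1 in Hz by auto.
      rewrite nth_error_app1 in Ht by lia.
      rewrite OV_app, !firstn_app, OV_length.
      replace (k - length G) with 0 by lia.
      replace (k - length ts) with 0 by lia. simpl. rewrite !app_nil_r.
      apply HasType_weaken; eauto.
    + rewrite nth_error_app2 in Hz by auto.
      rewrite nth_error_app2 in Ht by lia.
      destruct (k - length G) as [|j] eqn:Ej.
      2:{ simpl in Hz; destruct j; discriminate. }
      replace (k - length ts) with 0 in Ht by lia.
      simpl in Hz, Ht. injection Hz as <- <-. injection Ht as <-.
      assert (k = length G) as -> by lia.
      rewrite OV_app, firstn_app, OV_length, Nat.sub_diag, firstn_all2
        by (rewrite OV_length; lia).
      rewrite firstn_app, Hlen, Nat.sub_diag, (firstn_all2 ts) by lia.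
      simpl. rewrite !app_nil_r.
      apply R3 with (k := length D); auto.
      rewrite nth_error_app2, Nat.sub_diag by lia. reflexivity.
Qed.
End Judgements.

Section Formulas.
Context {L : Lang} {Sg : Sig L} {Pi : PSig L}.

Lemma Form_IsCtx G p : Form Sg Pi G p -> IsCtx Sg G.
Proof.
  induction 1 as [? ? ? ? _ []| | | | | |? ? ? ? _ _ IH|? ? ? ? _ _ IH]; auto;
    apply IsCtx_snoc_inv in IH; tauto.
Qed.

Lemma Form_and_l {G p q} : Form Sg Pi G (fand p q) -> Form Sg Pi G p.
Proof. inversion 1; auto. Qed.
Lemma Form_and_r {G p q} : Form Sg Pi G (fand p q) -> Form Sg Pi G q.
Proof. inversion 1; auto. Qed.
Lemma Form_or_l {G p q} : Form Sg Pi G (forr p q) -> Form Sg Pi G p.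
Proof. inversion 1; auto. Qed.
Lemma Form_or_r {G p q} : Form Sg Pi G (forr p q) -> Form Sg Pi G q.
Proof. inversion 1; auto. Qed.
Lemma Form_imp_l {G p q} : Form Sg Pi G (fimp p q) -> Form Sg Pi G p.
Proof. inversion 1; auto. Qed.
Lemma Form_imp_r {G p q} : Form Sg Pi G (fimp p q) -> Form Sg Pi G q.
Proof. inversion 1; auto. Qed.

Lemma Form_all_type {G x A q} : Form Sg Pi G (fall x A q) -> IsType Sg G A.
Proof. inversion 1; auto. Qed.
Lemma Form_ex_type {G x A q} : Form Sg Pi G (fex x A q) -> IsType Sg G A.
Proof. inversion 1; auto. Qed.

Section DeBruijn.
Variable hdB : deBruijn (LV L).

Lemma Form_all_var {G x A q} : Form Sg Pi G (fall x A q) -> x = fresh G.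
Proof.
  inversion 1 as [| | | | | |? ? ? ? _ Hq|].
  exact (IsCtx_snoc_fresh hdB _ _ _ (Form_IsCtx _ _ Hq)).
Qed.
Lemma Form_ex_var {G x A q} : Form Sg Pi G (fex x A q) -> x = fresh G.
Proof.
  inversion 1 as [| | | | | | |? ? ? ? _ Hq].
  exact (IsCtx_snoc_fresh hdB _ _ _ (Form_IsCtx _ _ Hq)).
Qed.

Lemma Form_all_body {G x A q} :
  Form Sg Pi G (fall x A q) -> Form Sg Pi (G ++ [(fresh G, A)]) q.
Proof. intros H. rewrite <- (Form_all_var H). inversion H; auto. Qed.
Lemma Form_ex_body {G x A q} :
  Form Sg Pi G (fex x A q) -> Form Sg Pi (G ++ [(fresh G, A)]) q.
Proof. intros H. rewrite <- (Form_ex_var H). inversion H; auto. Qed.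
End DeBruijn.

Lemma Form_atom_SubstMor {D R ts G} :
  Form Sg Pi D (fatom R ts) -> Pi R = Some G -> SubstMor Sg D G ts.
Proof. inversion 1 as [R' G' D' ts' e' Hts| | | | | | |]; intros e. congruence. Qed.

Lemma Form_atom_declared {D R ts} : Form Sg Pi D (fatom R ts) -> Pi R <> None.
Proof. inversion 1; congruence. Qed.

Lemma Form_generic_atom {R G} :
  IsPredSig Sg Pi -> Pi R = Some G -> Form Sg Pi G (fatom R (map tvar (OV G))).
Proof. intros hPi e. econstructor; eauto using SubstMor_id. Qed.

Lemma fsubst_generic_atom D G ts R :
  IsCtx Sg G -> length ts = length G ->
  fsubst D G ts (fatom R (map tvar (OV G))) = fatom R ts.
Proof.
  intros HG Hlen. simpl. f_equal. rewrite map_map.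
  apply map_lookup_NoDup; [exact (IsCtx_OV_NoDup _ HG)|rewrite OV_length; exact Hlen].
Qed.

Lemma Thm_Form G p q : Thm Sg Pi G p q -> Form Sg Pi G p /\ Form Sg Pi G q.
Proof.
  induction 1; try tauto;
  repeat match goal with h : _ /\ _ |- _ => destruct h end;
  try (split; auto; econstructor; eauto using Form_IsCtx, Form_and_l, Form_and_r,
                                              Form_imp_l, Form_imp_r; fail).
  all: try (split; econstructor; eauto using Form_IsCtx; fail).
  all: split; eauto using Form_and_l, Form_imp_r; constructor; eauto using Form_and_r, Form_imp_l.
Qed.
End Formulas.

Section HeytingPrealgebra.
Variable H : HPA.

Lemma hmeet_le_l x y : hle H (hmeet H x y) x.
Proof. exact (proj1 (proj1 (hmeet_spec H x y _) (hle_refl H _))). Qed.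
Lemma hmeet_le_r x y : hle H (hmeet H x y) y.
Proof. exact (proj2 (proj1 (hmeet_spec H x y _) (hle_refl H _))). Qed.
Lemma hle_hjoin_l x y : hle H x (hjoin H x y).
Proof. exact (proj1 (proj1 (hjoin_spec H x y _) (hle_refl H _))). Qed.
Lemma hle_hjoin_r x y : hle H y (hjoin H x y).
Proof. exact (proj2 (proj1 (hjoin_spec H x y _) (hle_refl H _))). Qed.
End HeytingPrealgebra.

Section Transport.
Context {C : Cwf} (Dh : Hyperdoctrine C).

Lemma castPr_prsub (X X' Y : Ob C) (e : X = X') (g : Hom C X Y) R :
  castPr Dh e (prsub Dh g R) = prsub Dh (castDom e g) R.
Proof. destruct e; reflexivity. Qed.

Lemma castPr_hle (X X' : Ob C) (e : X = X') a b :
  hle _ (castPr Dh e a) (castPr Dh e b) <-> hle _ a b.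
Proof. destruct e; reflexivity. Qed.

Lemma castDom_comp (X X' Y Z : Ob C) (e : X = X') (f : Hom C Y Z) (g : Hom C X Y) :
  castDom e (comp C f g) = comp C f (castDom e g).
Proof. destruct e; reflexivity. Qed.

Lemma castDom_pair (X X' G : Ob C) (e : X = X') (A : Ty C G) f a H :
  exists H', castDom e (pair C A f a H) = pair C A (castDom e f) (castTm e a) H'.
Proof. destruct e; exists H; reflexivity. Qed.

Lemma pair_congr (D G : Ob C) (A : Ty C G) f1 f2 a1 a2 H1 H2 :
  f1 = f2 -> a1 = a2 -> @pair C D G A f1 a1 H1 = pair C A f2 a2 H2.
Proof. intros -> ->. f_equal. apply proof_irrelevance. Qed.

(* [g] is [qmor f A] seen through the identifications [XD = D0.B], [XG = G0.A]. *)
Lemma quant_castPr_qmor (Q : forall G (S : Ty C G), hcar (Pr Dh (ext G S)) -> hcar (Pr Dh G))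
  (D0 G0 : Ob C) (f : Hom C D0 G0) (A : Ty C G0) (B : Ty C D0) (eB : B = tsub C A f)
  (XD XG : Ob C) (eD : XD = ext D0 B) (eG : XG = ext G0 A) (g : Hom C XD XG)
  (Hg : forall H, castDom eD (castCod eG g) = pair C A (comp C f (pp C B)) (vv C B) H)
  (Y : hcar (Pr Dh XG)) :
  Q D0 B (castPr Dh eD (prsub Dh g Y)) =
  Q D0 (tsub C A f) (prsub Dh (qmor C f A) (castPr Dh eG Y)).
Proof. subst XD XG B. unfold qmor. cbn in *. erewrite Hg. reflexivity. Qed.
End Transport.

Section Interpretation.
Context {L : Lang} (hdB : deBruijn (LV L)) (Sg : Sig L) (Pi : PSig L)
  (hPi : IsPredSig Sg Pi) (C : Cwf) (F : CwfMorFS Sg C) (Dh : Hyperdoctrine C)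
  (Rstar : forall (R : LP L) (G : ctx L) (e : Pi R = Some G),
             hcar (Pr Dh (Fob F (exist _ G (hPi R G e))))).

Definition interp_atom (G : CtxO Sg) R ts (H : Form Sg Pi (proj1_sig G) (fatom R ts))
  : hcar (Pr Dh (Fob F G)) :=
  match Pi R as o return Pi R = o -> hcar (Pr Dh (Fob F G)) with
  | Some G' => fun e =>
      prsub Dh (@Fmor _ _ _ F G (exist _ G' (hPi R G' e))
                  (exist _ ts (Form_atom_SubstMor H e))) (Rstar R G' e)
  | None => fun e => False_rect _ (Form_atom_declared H e)
  end eq_refl.

Fixpoint interp (G : CtxO Sg) (p : form L) {struct p}
  : Form Sg Pi (proj1_sig G) p -> hcar (Pr Dh (Fob F G)) :=
  match p with
  | fatom R ts => fun H => interp_atom G R ts H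
  | fbot => fun _ => hbot _
  | ftop => fun _ => htop _
  | fand p q => fun H =>
      hmeet _ (interp G p (Form_and_l H)) (interp G q (Form_and_r H))
  | forr p q => fun H =>
      hjoin _ (interp G p (Form_or_l H)) (interp G q (Form_or_r H))
  | fimp p q => fun H =>
      himp _ (interp G p (Form_imp_l H)) (interp G q (Form_imp_r H))
  | fall x A q => fun H =>
      let A' := exist _ A (Form_all_type H) : TyS Sg G in
      hall Dh (Fsig F A')
        (castPr Dh (F_ext F G A') (interp (extS G A') q (Form_all_body hdB H)))
  | fex x A q => fun H =>
      let A' := exist _ A (Form_ex_type H) : TyS Sg G in
      hex Dh (Fsig F A')
        (castPr Dh (F_ext F G A') (interp (extS G A') q (Form_ex_body hdB H)))
  end.

Lemma interp_irrel G p H1 H2 : interp G p H1 = interp G p H2.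
Proof. f_equal; apply proof_irrelevance. Qed.

Lemma Fmor_congr (D G : CtxO Sg) (m1 m2 : HomS Sg D G) :
  proj1_sig m1 = proj1_sig m2 -> Fmor F m1 = Fmor F m2.
Proof. destruct m1 as [ts h1], m2; cbn; intros <-; f_equal; f_equal; apply proof_irrelevance. Qed.

Lemma Fsig_congr (G : CtxO Sg) (A1 A2 : TyS Sg G) :
  proj1_sig A1 = proj1_sig A2 -> Fsig F A1 = Fsig F A2.
Proof. destruct A1 as [A h1], A2; cbn; intros <-; f_equal; f_equal; apply proof_irrelevance. Qed.

Lemma interp_atom_eq (G : CtxO Sg) R ts H G' (e : Pi R = Some G') h :
  interp_atom G R ts H =
  prsub Dh (@Fmor _ _ _ F G (exist _ G' (hPi R G' e)) (exist _ ts h)) (Rstar R G' e).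
Proof.
  unfold interp_atom. generalize (eq_refl (Pi R)).
  generalize (Pi R) at 2 3. intros [G''|] e0; [|congruence].
  assert (G'' = G') as -> by congruence. rewrite (proof_irrelevance _ e0 e).
  f_equal. apply Fmor_congr; reflexivity.
Qed.

Lemma interp_and_eq G p q H H1 H2 :
  interp G (fand p q) H = hmeet _ (interp G p H1) (interp G q H2).
Proof. cbn; f_equal; apply interp_irrel. Qed.
Lemma interp_or_eq G p q H H1 H2 :
  interp G (forr p q) H = hjoin _ (interp G p H1) (interp G q H2).
Proof. cbn; f_equal; apply interp_irrel. Qed.
Lemma interp_imp_eq G p q H H1 H2 :
  interp G (fimp p q) H = himp _ (interp G p H1) (interp G q H2).
Proof. cbn; f_equal; apply interp_irrel. Qed.

Lemma interp_all_eq G A q (H : Form Sg Pi (proj1_sig G) (fall (fresh (proj1_sig G)) A q))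
  hA (Hq : Form Sg Pi (proj1_sig (extS G (exist _ A hA))) q) :
  interp G (fall (fresh (proj1_sig G)) A q) H =
  hall Dh (Fsig F (exist _ A hA))
    (castPr Dh (F_ext F G (exist _ A hA)) (interp (extS G (exist _ A hA)) q Hq)).
Proof.
  cbn. generalize (Form_all_type H) (Form_all_body hdB H). intros hA' Hq'.
  rewrite (proof_irrelevance _ hA' hA). f_equal; f_equal. apply interp_irrel.
Qed.

Lemma interp_ex_eq G A q (H : Form Sg Pi (proj1_sig G) (fex (fresh (proj1_sig G)) A q))
  hA (Hq : Form Sg Pi (proj1_sig (extS G (exist _ A hA))) q) :
  interp G (fex (fresh (proj1_sig G)) A q) H =
  hex Dh (Fsig F (exist _ A hA))
    (castPr Dh (F_ext F G (exist _ A hA)) (interp (extS G (exist _ A hA)) q Hq)).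
Proof.
  cbn. generalize (Form_ex_type H) (Form_ex_body hdB H). intros hA' Hq'.
  rewrite (proof_irrelevance _ hA' hA). f_equal; f_equal. apply interp_irrel.
Qed.

Definition projS (G : CtxO Sg) (A : TyS Sg G) : HomS Sg (extS G A) G :=
  exist _ _ (SubstMor_weaken _ _ _ _ (SubstMor_id _ (proj2_sig G)) (proj2_sig (extS G A))).

Lemma Fmor_lift_pair (G D : CtxO Sg) (m : HomS Sg D G) (A : TyS Sg G)
  (hB : IsType Sg (proj1_sig D) (ysubst (OV (proj1_sig G)) (proj1_sig m) (proj1_sig A)))
  (m' : HomS Sg (extS D (exist _ _ hB)) (extS G A))
  (em' : proj1_sig m' = proj1_sig m ++ [tvar (fresh (proj1_sig D))]) H :
  castDom (F_ext F D (exist _ _ hB)) (castCod (F_ext F G A) (Fmor F m')) =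
  pair C (Fsig F A) (comp C (Fmor F m) (pp C (Fsig F (exist _ _ hB))))
    (vv C (Fsig F (exist _ _ hB))) H.
Proof.
  destruct m' as [l hm']; cbn in em'; subst l.
  set (B := exist _ _ hB : TyS Sg D).
  pose proof (proj2_sig (extS D B)) as hDB.
  set (mw := exist _ (proj1_sig m) (SubstMor_weaken _ _ _ _ (proj2_sig m) hDB)
         : HomS Sg (extS D B) G).
  assert (hb : IsType Sg (proj1_sig (extS D B)) (proj1_sig B) /\
               HasType Sg (proj1_sig (extS D B)) (tvar (fresh (proj1_sig D))) (proj1_sig B)).
  { split; [apply IsType_weaken; auto|].
    apply R3 with (k := length (proj1_sig D)); auto. cbn.
    rewrite nth_error_app2, Nat.sub_diag by lia. reflexivity. }
  assert (Hty : tmty C (Fth Sg C F (extS D B) (exist _ (proj1_sig B, tvar (fresh (proj1_sig D))) hb))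
                = tsub C (Fsig F A) (Fmor F mw)).
  { rewrite Fth_ty, <- (Fsig_sub Sg C F _ _ mw A (proj1 hb)). apply Fsig_congr; reflexivity. }
  etransitivity.
  { apply (f_equal (castDom (F_ext F D B))).
    exact (F_pair Sg C F (extS D B) G A mw (tvar (fresh (proj1_sig D))) hb hm' Hty). }
  destruct (castDom_pair _ _ _ (F_ext F D B) (Fsig F A) _ _ Hty) as [H' EH].
  etransitivity; [exact EH|].
  apply pair_congr; [|apply (Fth_v Sg C F D B)].
  assert (hc : SubstMor Sg (proj1_sig (extS D B)) (proj1_sig G) (compS m (projS D B))).
  { unfold compS; cbn. rewrite map_tsubst_map_tvar. exact (proj2_sig mw). }
  rewrite (Fmor_congr _ _ mw (exist _ _ hc))
    by (unfold compS; cbn; symmetry; apply map_tsubst_map_tvar).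
  rewrite (F_comp Sg C F _ _ _ m (projS D B) hc), castDom_comp.
  f_equal. apply (F_p Sg C F D B).
Qed.

Lemma quant_Fmor_lift (Q : forall G (S : Ty C G), hcar (Pr Dh (ext G S)) -> hcar (Pr Dh G))
  (Qbc : forall D G (f : Hom C D G) S R,
     prsub Dh f (Q G S R) = Q D (tsub C S f) (prsub Dh (qmor C f S) R))
  (G D : CtxO Sg) (m : HomS Sg D G) (A : TyS Sg G)
  (hB : IsType Sg (proj1_sig D) (ysubst (OV (proj1_sig G)) (proj1_sig m) (proj1_sig A)))
  (m' : HomS Sg (extS D (exist _ _ hB)) (extS G A))
  (em' : proj1_sig m' = proj1_sig m ++ [tvar (fresh (proj1_sig D))])
  (X : hcar (Pr Dh (Fob F (extS G A)))) :
  Q _ (Fsig F (exist _ _ hB)) (castPr Dh (F_ext F D (exist _ _ hB)) (prsub Dh (Fmor F m') X)) =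
  prsub Dh (Fmor F m) (Q _ (Fsig F A) (castPr Dh (F_ext F G A) X)).
Proof.
  rewrite Qbc. apply quant_castPr_qmor; [apply Fsig_sub|apply Fmor_lift_pair, em'].
Qed.

Lemma interp_fsubst p : forall (G D : CtxO Sg) (m : HomS Sg D G) Hp Hs,
  interp D (fsubst (proj1_sig D) (proj1_sig G) (proj1_sig m) p) Hs =
  prsub Dh (Fmor F m) (interp G p Hp).
Proof.
  induction p as [R us| | |p1 IH1 p2 IH2|p1 IH1 p2 IH2|p1 IH1 p2 IH2|x A q IH|x A q IH];
    intros G D m Hp Hs;
    destruct (prsub_hmor C Dh _ _ (Fmor F m)) as (_ & Htop & Hbot & Hmeet & Hjoin & Himp);
    cbn [fsubst interp] in *.
  - destruct (Pi R) as [G'|] eqn:e; [|exfalso; exact (Form_atom_declared Hp e)].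
    rewrite (interp_atom_eq G R us Hp G' e (Form_atom_SubstMor Hp e)),
      (interp_atom_eq D R _ Hs G' e (Form_atom_SubstMor Hs e)), <- prsub_comp.
    f_equal. etransitivity; [|exact (F_comp Sg C F D G (exist _ G' (hPi R G' e))
                                 (exist _ us (Form_atom_SubstMor Hp e)) m (Form_atom_SubstMor Hs e))].
    apply Fmor_congr; reflexivity.
  - auto.
  - auto.
  - rewrite Hmeet; f_equal; auto.
  - rewrite Hjoin; f_equal; auto.
  - rewrite Himp; f_equal; auto.
  - pose proof (Form_all_var hdB Hp) as ->.
    set (A' := exist _ A (Form_all_type Hp) : TyS Sg G).
    set (B' := exist _ _ (Form_all_type Hs) : TyS Sg D).
    set (m' := exist _ _ (SubstMor_lift (proj2_sig m) (proj2_sig (extS G A')) (proj2_sig (extS D B')))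
          : HomS Sg (extS D B') (extS G A')).
    transitivity (hall Dh (Fsig F B') (castPr Dh (F_ext F D B')
      (prsub Dh (Fmor F m') (interp (extS G A') q (Form_all_body hdB Hp))))).
    { do 2 f_equal. exact (IH (extS G A') (extS D B') m' _ _). }
    exact (quant_Fmor_lift (@hall C Dh) (hall_bc C Dh) G D m A' _ m' eq_refl _).
  - pose proof (Form_ex_var hdB Hp) as ->.
    set (A' := exist _ A (Form_ex_type Hp) : TyS Sg G).
    set (B' := exist _ _ (Form_ex_type Hs) : TyS Sg D).
    set (m' := exist _ _ (SubstMor_lift (proj2_sig m) (proj2_sig (extS G A')) (proj2_sig (extS D B')))
          : HomS Sg (extS D B') (extS G A')).
    transitivity (hex Dh (Fsig F B') (castPr Dh (F_ext F D B')
      (prsub Dh (Fmor F m') (interp (extS G A') q (Form_ex_body hdB Hp))))).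
    { do 2 f_equal. exact (IH (extS G A') (extS D B') m' _ _). }
    exact (quant_Fmor_lift (@hex C Dh) (hex_bc C Dh) G D m A' _ m' eq_refl _).
Qed.

Lemma interp_pweak (G : CtxO Sg) (A : TyS Sg G) p Hp Hw :
  castPr Dh (F_ext F G A)
    (interp (extS G A) (pweak (proj1_sig G) (fresh (proj1_sig G)) (proj1_sig A) p) Hw)
  = prsub Dh (pp C (Fsig F A)) (interp G p Hp).
Proof.
  assert (E : interp (extS G A) (pweak (proj1_sig G) (fresh (proj1_sig G)) (proj1_sig A) p) Hw
              = prsub Dh (Fmor F (projS G A)) (interp G p Hp))
    by exact (interp_fsubst p G (extS G A) (projS G A) Hp Hw).
  rewrite E, castPr_prsub. f_equal. apply F_p.
Qed.

Lemma interp_hle_all (G : CtxO Sg) (A : TyS Sg G) p q Hp Hall Hw Hq :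
  hle _ (interp G p Hp) (interp G (fall (fresh (proj1_sig G)) (proj1_sig A) q) Hall) <->
  hle _ (interp (extS G A) (pweak (proj1_sig G) (fresh (proj1_sig G)) (proj1_sig A) p) Hw)
        (interp (extS G A) q Hq).
Proof.
  destruct A as [A hA]; cbn [proj1_sig].
  rewrite (interp_all_eq G A q Hall hA Hq), hall_adj, <- (interp_pweak _ _ p Hp Hw).
  apply castPr_hle.
Qed.

Lemma interp_hle_ex (G : CtxO Sg) (A : TyS Sg G) p q Hp Hex Hw Hq :
  hle _ (interp G (fex (fresh (proj1_sig G)) (proj1_sig A) q) Hex) (interp G p Hp) <->
  hle _ (interp (extS G A) q Hq)
        (interp (extS G A) (pweak (proj1_sig G) (fresh (proj1_sig G)) (proj1_sig A) p) Hw).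
Proof.
  destruct A as [A hA]; cbn [proj1_sig].
  rewrite (interp_ex_eq G A q Hex hA Hq), hex_adj, <- (interp_pweak _ _ p Hp Hw).
  apply castPr_hle.
Qed.

Lemma CtxO_snoc_extS (G' : CtxO Sg) G x A :
  proj1_sig G' = G ++ [(x, A)] ->
  exists (hG : IsCtx Sg G) (hA : IsType Sg G A),
    x = fresh G /\ G' = extS (exist _ G hG) (exist _ A hA).
Proof.
  destruct G' as [G0 hG0]; cbn; intros ->.
  destruct (IsCtx_snoc_inv _ _ _ hG0) as (hG & hA & hx).
  exists hG, hA. assert (x = fresh G) as -> by (apply hdB; exact hx).
  split; [reflexivity|]. apply subset_eq_compat. reflexivity.
Qed.

Lemma interp_fsubst_hle (G D : CtxO Sg) (m : HomS Sg D G) p q Hp Hq Hsp Hsq :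
  hle _ (interp G p Hp) (interp G q Hq) ->
  hle _ (interp D (fsubst (proj1_sig D) (proj1_sig G) (proj1_sig m) p) Hsp)
        (interp D (fsubst (proj1_sig D) (proj1_sig G) (proj1_sig m) q) Hsq).
Proof.
  rewrite (interp_fsubst p G D m Hp Hsp), (interp_fsubst q G D m Hq Hsq).
  apply prsub_hmor.
Qed.

Lemma interp_sound G p q : Thm Sg Pi G p q ->
  forall (G' : CtxO Sg) (eG : proj1_sig G' = G) Hp Hq,
    hle _ (interp G' p Hp) (interp G' q Hq).
Proof.
  induction 1 as [G p Fp|G p q r H1 IH1 H2 IH2|G p q Fp Fq|G p q Fp Fq|G r p q H1 IH1 H2 IH2
    |G p Fp|G p q Fp Fq|G p q Fp Fq|G p q r H1 IH1 H2 IH2|G p Fp|G t p q H1 IH1|G t p q H1 IH1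
    |G x A p q Fp Fall H1 IH1|G x A p q Fpw Fq H1 IH1|G x A p q Fex Fp H1 IH1
    |G x A p q Fq Fpw H1 IH1|D G ts p q H1 IH1 Hs Fp Fq];
    intros G' eG Hp Hq; try subst G.
  - rewrite (interp_irrel _ _ Hq Hp). apply hle_refl.
  - apply hle_trans with (interp G' q (proj2 (Thm_Form _ _ _ H1))); auto.
  - rewrite (interp_and_eq G' p q Hp Hq (Form_and_r Hp)). apply hmeet_le_l.
  - rewrite (interp_and_eq G' p q Hp (Form_and_l Hp) Hq). apply hmeet_le_r.
  - rewrite (interp_and_eq G' p q Hq (Form_and_l Hq) (Form_and_r Hq)).
    apply hmeet_spec; auto.
  - apply hle_top.
  - rewrite (interp_or_eq G' p q Hq Hp (Form_or_r Hq)). apply hle_hjoin_l.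
  - rewrite (interp_or_eq G' p q Hq (Form_or_l Hq) Hp). apply hle_hjoin_r.
  - rewrite (interp_or_eq G' p q Hp (Form_or_l Hp) (Form_or_r Hp)).
    apply hjoin_spec; auto.
  - apply hbot_le.
  - rewrite (interp_imp_eq G' p q Hq (Form_imp_l Hq) (Form_imp_r Hq)).
    apply himp_spec.
    rewrite <- (interp_and_eq G' t p (Fm_and Sg Pi _ _ _ Hp (Form_imp_l Hq))). auto.
  - rewrite (interp_and_eq G' t p Hp (Form_and_l Hp) (Form_and_r Hp)).
    apply himp_spec.
    rewrite <- (interp_imp_eq G' p q (Fm_imp Sg Pi _ _ _ (Form_and_r Hp) Hq)). auto.
  - pose proof (Form_all_var hdB Hq) as ->.
    apply (interp_hle_all G' (exist _ A (Form_all_type Hq)) p q Hp Hq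
             (proj1 (Thm_Form _ _ _ H1)) (Form_all_body hdB Hq)).
    auto.
  - destruct (CtxO_snoc_extS G' G x A eG) as (hG & hA & -> & ->).
    apply (interp_hle_all (exist _ G hG) (exist _ A hA) p q (proj1 (Thm_Form _ _ _ H1))
             (Fm_all Sg Pi _ _ _ _ hA Fq) Hp Hq).
    auto.
  - pose proof (Form_ex_var hdB Hp) as ->.
    apply (interp_hle_ex G' (exist _ A (Form_ex_type Hp)) p q Hq Hp
             (proj2 (Thm_Form _ _ _ H1)) (Form_ex_body hdB Hp)).
    auto.
  - destruct (CtxO_snoc_extS G' G x A eG) as (hG & hA & -> & ->).
    apply (interp_hle_ex (exist _ G hG) (exist _ A hA) p q (proj2 (Thm_Form _ _ _ H1))
             (Fm_ex Sg Pi _ _ _ _ hA Fq) Hq Hp).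
    auto.
  - subst D. destruct (Thm_Form _ _ _ H1) as [FpG FqG].
    set (G0 := exist _ G (proj1 (proj2 Hs)) : CtxO Sg).
    exact (interp_fsubst_hle G0 G' (exist _ ts Hs) p q FpG FqG Hp Hq (IH1 G0 eq_refl _ _)).
Qed.

Definition interpMor (G : CtxO Sg) (x : PrS Sg Pi G) : hcar (Pr Dh (Fob F G)) :=
  interp G (proj1_sig x) (proj2_sig x).

Lemma interpMor_FBasedMor : FBasedMor F Dh interpMor.
Proof.
  split; [|split; [|split]].
  - intros G. repeat split.
    + intros [x hx] [y hy] Hxy. exact (interp_sound _ _ _ Hxy G eq_refl hx hy).
    + intros [x hx] [y hy]. apply interp_and_eq.
    + intros [x hx] [y hy]. apply interp_or_eq.
    + intros [x hx] [y hy]. apply interp_imp_eq.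
  - intros D G m [p hp] h. exact (interp_fsubst p G D m hp h).
  - intros G [A hA] [q hq]. exact (interp_all_eq G A q _ hA hq).
  - intros G [A hA] [q hq]. exact (interp_ex_eq G A q _ hA hq).
Qed.

Lemma interpMor_InterpretsPreds : InterpretsPreds F Dh hPi Rstar interpMor.
Proof.
  intros R G e h. unfold interpMor; cbn.
  rewrite (interp_atom_eq (exist _ G (hPi R G e)) R _ h G e (SubstMor_id _ (hPi R G e))).
  rewrite F_id. apply prsub_id.
Qed.

Lemma PrS_eq (G : CtxO Sg) (x y : PrS Sg Pi G) : proj1_sig x = proj1_sig y -> x = y.
Proof. destruct x, y; apply subset_eq_compat. Qed.

Section Uniqueness.
Variable Gm : forall G : CtxO Sg, PrS Sg Pi G -> hcar (Pr Dh (Fob F G)).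
Hypotheses (HGm : FBasedMor F Dh Gm) (HR : InterpretsPreds F Dh hPi Rstar Gm).

Lemma FBasedMor_eq_interp p : forall (G : CtxO Sg) H, Gm G (exist _ p H) = interp G p H.
Proof.
  destruct HGm as (Hheyt & Hsub & Hall & Hex).
  induction p as [R ts| | |p1 IH1 p2 IH2|p1 IH1 p2 IH2|p1 IH1 p2 IH2|x A q IH|x A q IH];
    intros G H; cbn [interp];
    destruct (Hheyt G) as (_ & Htop & Hbot & Hmeet & Hjoin & Himp).
  - destruct (Pi R) as [G'|] eqn:e; [|exfalso; exact (Form_atom_declared H e)].
    pose proof (Form_atom_SubstMor H e) as hts.
    set (G'o := exist _ G' (hPi R G' e) : CtxO Sg).
    assert (Ets : fsubst (proj1_sig G) G' ts (fatom R (map tvar (OV G'))) = fatom R ts)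
      by exact (fsubst_generic_atom _ _ _ _ (hPi R G' e) (proj1 (proj2 (proj2 hts)))).
    assert (hsub : Form Sg Pi (proj1_sig G) (fsubst (proj1_sig G) G' ts (fatom R (map tvar (OV G')))))
      by (rewrite Ets; exact H).
    rewrite (interp_atom_eq G R ts H G' e hts), <- (HR R G' e (Form_generic_atom hPi e)).
    transitivity (Gm G (exist _ _ hsub)); [f_equal; apply PrS_eq; symmetry; exact Ets|].
    exact (Hsub G G'o (exist _ ts hts) (exist _ _ (Form_generic_atom hPi e)) hsub).
  - rewrite <- Hbot. f_equal. apply PrS_eq. reflexivity.
  - rewrite <- Htop. f_equal. apply PrS_eq. reflexivity.
  - rewrite <- IH1, <- IH2, <- Hmeet. f_equal. apply PrS_eq. reflexivity.
  - rewrite <- IH1, <- IH2, <- Hjoin. f_equal. apply PrS_eq. reflexivity.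
  - rewrite <- IH1, <- IH2, <- Himp. f_equal. apply PrS_eq. reflexivity.
  - pose proof (Form_all_var hdB H) as ->. cbn [interp].
    rewrite <- IH, <- Hall. f_equal. apply PrS_eq. reflexivity.
  - pose proof (Form_ex_var hdB H) as ->. cbn [interp].
    rewrite <- IH, <- Hex. f_equal. apply PrS_eq. reflexivity.
Qed.
End Uniqueness.
End Interpretation.

Theorem mainTheorem19 (L : Lang) (hdB : deBruijn (LV L))
  (Sg : Sig L) (hSg : IsSignature Sg)
  (C : Cwf) (F : CwfMorFS Sg C)
  (Pi : PSig L) (hPi : IsPredSig Sg Pi)
  (Dh : Hyperdoctrine C)
  (Rstar : forall (R : LP L) (G : ctx L) (e : Pi R = Some G),
             hcar (Pr Dh (Fob F (exist _ G (hPi R G e))))) :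
  exists Gm : (forall G : CtxO Sg, PrS Sg Pi G -> hcar (Pr Dh (Fob F G))),
    FBasedMor F Dh Gm /\ InterpretsPreds F Dh hPi Rstar Gm /\
    (forall Gm' : (forall G : CtxO Sg, PrS Sg Pi G -> hcar (Pr Dh (Fob F G))),
       FBasedMor F Dh Gm' -> InterpretsPreds F Dh hPi Rstar Gm' ->
       forall (G : CtxO Sg) (p : PrS Sg Pi G), Gm' G p = Gm G p).
Proof.
  exists (interpMor hdB Sg Pi hPi C F Dh Rstar).
  split; [apply interpMor_FBasedMor|split; [apply interpMor_InterpretsPreds|]].
  intros Gm' HGm' HR' G [p H].
  exact (FBasedMor_eq_interp hdB Sg Pi hPi C F Dh Rstar Gm' HGm' HR' p G H).
Qed.
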